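(* For every real operator ideal $\mathfrak R$ one has $(\mathfrak R_{\mathbb C})_{\mathbb R}=\mathfrak R$.
   Context: All Banach spaces are over $\mathbb R$. A Banach space with an $i$-operator is a pair $[X,A]$ with $X$ a real Banach space and $A:X\to X$ bounded linear with $A^2=-I_X$ and $\|\alpha x+\beta Ax\|=\|x\|$ whenever $\alpha^2+\beta^2=1$; these are exactly complex Banach spaces ($A$ = multiplication by $i$). A bounded linear $T:X\to Y$ with $TA=BT$ gives a complex operator $[T,A,B]:[X,A]\to[Y,B]$. A real (resp. complex) operator ideal in the sense of Pietsch assigns to each pair of real Banach spaces (resp. Banach spaces with an $i$-operator) a linear subspace of the bounded (resp. bounded complex-linear) operators between them containing all finite rank operators and stable under composition on either side with bounded (complex) operators. For a real Banach space $X$, its complexification is $[X\oplus X,N_X]$ with $N_X(x_1,x_2)=(-x_2,x_1)$ and norm $\|(x_1,x_2)\|=\left(\frac1{2\pi}\int_{-\pi}^{\pi}\|x_1\cos\phi+x_2\sin\phi\|^2d\phi\right)^{1/2}$. For a real operator ideal $\mathfrak R$, its complexification is the complex ideal $\mathfrak R_{\mathbb C}([X,A],[Y,B])=\{[T,A,B]: TA=BT,\ T\in\mathfrak R(X,Y)\}$. For a complex operator ideal $\mathfrak C$, its real form is the real ideal $\mathfrak C_{\mathbb R}(X,Y)=\{T:X\to Y \text{ bounded linear}: [T\oplus T,N_X,N_Y]\in\mathfrak C([X\oplus X,N_X],[Y\oplus Y,N_Y])\}$, where $(T\oplus T)(x_1,x_2)=(Tx_1,Tx_2)$. *)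

From HB Require Import structures.
From mathcomp Require Import all_boot all_order all_algebra.
From mathcomp Require Import all_classical all_reals all_analysis.
Set Implicit Arguments. Unset Strict Implicit. Unset Printing Implicit Defensive.
Import Order.TTheory GRing.Theory Num.Theory.
Import numFieldNormedType.Exports.
Local Open Scope classical_set_scope.
Local Open Scope ring_scope.

Section Defs.
Variable R : realType.

Definition bounded_linear (X Y : normedModType R) (T : X -> Y) : Prop :=
  (forall (a : R) (x y : X), T (a *: x + y) = a *: T x + T y) /\ continuous T.

Definition finite_rank (X Y : normedModType R) (T : X -> Y) : Prop :=
  exists (n : nat) (ys : 'I_n -> Y),
    forall x, exists c : 'I_n -> R, T x = \sum_(i < n) c i *: ys i.

Local Unset Implicit Arguments.
Record real_op_ideal := RealOpIdeal {
  ideal_of :> forall X Y : completeNormedModType R, set (X -> Y);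
  ideal_bounded : forall (X Y : completeNormedModType R) (T : X -> Y),
    ideal_of X Y T -> bounded_linear T;
  ideal_zero : forall X Y : completeNormedModType R,
    ideal_of X Y (fun _ => 0);
  ideal_add : forall (X Y : completeNormedModType R) (S T : X -> Y),
    ideal_of X Y S -> ideal_of X Y T -> ideal_of X Y (S \+ T);
  ideal_scale : forall (X Y : completeNormedModType R) (a : R) (T : X -> Y),
    ideal_of X Y T -> ideal_of X Y (fun x => a *: T x);
  ideal_finite_rank : forall (X Y : completeNormedModType R) (T : X -> Y),
    bounded_linear T -> finite_rank T -> ideal_of X Y T;
  ideal_comp : forall (W X Y Z : completeNormedModType R)
    (S : W -> X) (T : X -> Y) (U : Y -> Z),
    bounded_linear S -> bounded_linear U -> ideal_of X Y T ->
    ideal_of W Z (U \o T \o S) }.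
Local Set Implicit Arguments.

(* A complex operator ideal is given on pairs [X, A] (Banach space with an
   i-operator); we only need its underlying assignment. *)
Definition complex_assignment :=
  forall (X : completeNormedModType R) (A : X -> X)
         (Y : completeNormedModType R) (B : Y -> Y), set (X -> Y).

Definition cnorm2 (X : normedModType R) (x1 x2 : X) : \bar R :=
  (((2 * pi) ^-1)%:E *
   \int[lebesgue_measure]_(phi in `[(- pi : R)%R, pi]%classic)
      ((`|cos phi *: x1 + sin phi *: x2| ^+ 2)%:E))%E.

(* A complexification of X: a Banach space XC together with a linear
   bijection j : X * X -> XC (inverse jinv) which is isometric for the
   norm above, i.e. XC "is" X (+) X with the complexification norm. *)
Record complexification (X : completeNormedModType R) := Complexification {
  cspace : completeNormedModType R;
  cinj : X * X -> cspace;
  cproj : cspace -> X * X;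
  cinjK : cancel cinj cproj;
  cprojK : cancel cproj cinj;
  cinj_linear : forall (a : R) (u v : X * X),
     cinj (a *: u + v) = a *: cinj u + cinj v;
  cinj_norm : forall x1 x2 : X,
     ((`|cinj (x1, x2)| ^+ 2)%:E = cnorm2 x1 x2)%E }.

(* The i-operator N_X(x1, x2) = (-x2, x1) transported to the complexification *)
Definition cN (X : completeNormedModType R) (c : complexification X) :
  cspace c -> cspace c :=
  fun z => @cinj X c (- (@cproj X c z).2, (@cproj X c z).1).

Definition cT (X Y : completeNormedModType R) (cX : complexification X)
  (cY : complexification Y) (T : X -> Y) : cspace cX -> cspace cY :=
  fun z => @cinj Y cY (T (@cproj X cX z).1, T (@cproj X cX z).2).

Definition ideal_complexify (I : real_op_ideal) : complex_assignment :=
  fun X A Y B T => (forall x, T (A x) = B (T x)) /\ I X Y T.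

(* real form of a complex ideal; the complexification is unique up to
   isometric isomorphism, and we quantify over all of its realizations. *)
Definition real_form (C : complex_assignment) :
  forall X Y : completeNormedModType R, set (X -> Y) :=
  fun X Y T => forall (cX : complexification X) (cY : complexification Y),
    C (@cspace X cX) (@cN X cX) (@cspace Y cY) (@cN Y cY) (@cT X Y cX cY T).

End Defs.

Arguments ideal_of {R} r X Y _.
Arguments real_form {R} C X Y _.
Arguments ideal_complexify {R} I X A Y B _.

(* Writing j1, j2 for the coordinate embeddings and
   p1, p2 for the coordinate projections of a complexification, one has
   T (+) T = j1 T p1 + j2 T p2 and T = p1 (T (+) T) j1, so both inclusions follow
   from the ideal axioms once j1, j2, p1, p2 are bounded.  Boundedness, and the
   existence of a complexification at all, come from comparing the
   complexification norm with |x1| + |x2|: the upper bound is immediate, and the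
   lower bound |x1| <= 2 ||(x1, x2)|| follows by averaging over t and -t, since
   x1 cos t + x2 sin t and x1 cos t - x2 sin t add up to 2 x1 cos t.  The
   triangle inequality is Minkowski's inequality, obtained by integrating
   (a + b)^2 <= (1 + s) a^2 + (1 + 1/s) b^2 and choosing the optimal weight s. *)

From HB Require Import structures.
From mathcomp Require Import all_boot all_order all_algebra.
From mathcomp Require Import all_classical all_reals all_analysis.
From mathcomp Require Import ring lra.
Set Implicit Arguments. Unset Strict Implicit. Unset Printing Implicit Defensive.
Import Order.TTheory GRing.Theory Num.Theory.
Import numFieldNormedType.Exports.
Local Open Scope classical_set_scope.
Local Open Scope ring_scope.

Lemma sqr_addr_le (R : realFieldType) (a b s : R) : 0 < s ->
  (a + b) ^+ 2 <= (1 + s) * a ^+ 2 + (1 + s^-1) * b ^+ 2.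
Proof.
move=> s0; rewrite -subr_ge0.
have -> : (1 + s) * a ^+ 2 + (1 + s^-1) * b ^+ 2 - (a + b) ^+ 2 = s^-1 * (s * a - b) ^+ 2.
  by field; rewrite gt_eqF.
by rewrite mulr_ge0 ?sqr_ge0 // invr_ge0 ltW.
Qed.

Lemma cauchy_lipschitz_map (R : numFieldType) (V W : normedModType R)
    (f : V -> W) (k : R) :
  0 < k -> (forall x y, `|f x - f y| <= k * `|x - y|) ->
  forall F, ProperFilter F -> cauchy F -> cauchy (f @ F).
Proof.
move=> k0 fk F FF /cauchyP Fc; apply: cauchy_exP => e e0.
have [x Fx] := Fc (e / k) (divr_gt0 e0 k0).
exists (f x); rewrite /fmap /=; apply: filterS Fx => z.
rewrite -!ball_normE /ball_ /= => xz.
by apply: le_lt_trans (fk x z) _; rewrite mulrC -ltr_pdivlMr.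
Qed.

Lemma bounded_linear_of_le (R : realType) (V W : normedModType R) (f : V -> W) (k : R) :
  (forall (a : R) x y, f (a *: x + y) = a *: f x + f y) ->
  (forall x, `|f x| <= k * `|x|) -> bounded_linear f.
Proof.
move=> fl fk; split => // x.
have fB u v : f (u - v) = f u - f v by rewrite -scaleN1r addrC fl scaleN1r addrC.
have k1_gt0 : 0 < `|k| + 1 by rewrite ltr_wpDl.
apply/cvgrPdist_lt => e e0.
have ek : 0 < e / (`|k| + 1) by rewrite divr_gt0.
near=> y; rewrite -fB; apply: le_lt_trans (fk _) _.
have : `|x - y| < e / (`|k| + 1) by near: y; exact: cvgr_dist_lt.
rewrite ltr_pdivlMr // => xy.
have := normr_ge0 (x - y); have := ler_norm k; nra.
Unshelve. all: by end_near.
Qed.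

Lemma bounded_linearN (R : realType) (V W : normedModType R) (f : V -> W) :
  bounded_linear f -> forall x, f (- x) = - f x.
Proof.
move=> [f_linear _] x.
have f0 : f 0 = 0.
  by apply: (addrI (f 0)); rewrite addr0 -{1}[f 0]scale1r -f_linear scale1r addr0.
by rewrite -scaleN1r -[_ *: x]addr0 f_linear f0 addr0 scaleN1r.
Qed.

Section TrigIntegrals.
Variable R : realType.
Local Notation mu := (@lebesgue_measure R).
Definition Ipi : set R := `[(- pi)%R, pi].

Lemma measurable_Ipi : measurable Ipi.
Proof. exact: measurable_itv. Qed.

Lemma continuous_sqr (f : R -> R) : continuous f -> continuous (fun t => f t ^+ 2).
Proof. by move=> cf t; apply: continuousM; exact: cf. Qed.

Lemma continuous_add (f g : R -> R) :
  continuous f -> continuous g -> continuous (fun t => f t + g t).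
Proof. by move=> cf cg t; apply: continuousD; [exact: cf|exact: cg]. Qed.

Lemma continuous_mull (a : R) (f : R -> R) :
  continuous f -> continuous (fun t => a * f t).
Proof. by move=> cf t; apply: continuousM; [exact: cst_continuous|exact: cf]. Qed.

Lemma continuous_integrable_Ipi (f : R -> R) :
  continuous f -> mu.-integrable Ipi (EFin \o f).
Proof.
move=> cf; apply: continuous_compact_integrable; first exact: segment_compact.
exact: continuous_subspaceT.
Qed.

Lemma continuous_integral_Ipi (f : R -> R) : continuous f ->
  (\int[mu]_(t in Ipi) (f t)%:E)%E = (\int[mu]_(t in Ipi) f t)%:E.
Proof.
move=> cf; rewrite fineK // integrable_fin_num //.
  exact: measurable_Ipi.
exact: continuous_integrable_Ipi.
Qed.

Lemma lebesgue_measure_Ipi : fine (mu Ipi) = pi *+ 2.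
Proof.
rewrite /Ipi lebesgue_measure_itv /= ifT; last by rewrite lte_fin gtrN // pi_gt0.
by rewrite /= opprK mulr2n.
Qed.

Lemma Rintegral_Ipi_cst (c : R) : \int[mu]_(t in Ipi) c = c * (pi *+ 2).
Proof. by rewrite Rintegral_cst ?lebesgue_measure_Ipi //; exact: measurable_Ipi. Qed.

Lemma Rintegral_Ipi_le (f g : R -> R) : continuous f -> continuous g ->
  (forall t, f t <= g t) -> \int[mu]_(t in Ipi) f t <= \int[mu]_(t in Ipi) g t.
Proof.
move=> cf cg fg; apply: le_Rintegral => //; first exact: measurable_Ipi.
- exact: continuous_integrable_Ipi.
- exact: continuous_integrable_Ipi.
Qed.

Lemma RintegralD_Ipi (f g : R -> R) : continuous f -> continuous g ->
  \int[mu]_(t in Ipi) (f t + g t) = \int[mu]_(t in Ipi) f t + \int[mu]_(t in Ipi) g t.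
Proof.
move=> cf cg; apply: RintegralD; first exact: measurable_Ipi.
- exact: continuous_integrable_Ipi.
- exact: continuous_integrable_Ipi.
Qed.

Lemma RintegralB_Ipi (f g : R -> R) : continuous f -> continuous g ->
  \int[mu]_(t in Ipi) (f t - g t) = \int[mu]_(t in Ipi) f t - \int[mu]_(t in Ipi) g t.
Proof.
move=> cf cg; apply: RintegralB; first exact: measurable_Ipi.
- exact: continuous_integrable_Ipi.
- exact: continuous_integrable_Ipi.
Qed.

Lemma RintegralZl_Ipi (a : R) (f : R -> R) : continuous f ->
  \int[mu]_(t in Ipi) (a * f t) = a * \int[mu]_(t in Ipi) f t.
Proof.
move=> cf; apply: RintegralZl; first exact: measurable_Ipi.
exact: continuous_integrable_Ipi.
Qed.

Lemma Rintegral_Ipi_oppr (f : R -> R) : continuous f ->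
  \int[mu]_(t in Ipi) f (- t) = \int[mu]_(t in Ipi) f t.
Proof.
move=> cf; rewrite /Rintegral /Ipi.
have := @integration_by_substitution_oppr R f (- pi) pi.
rewrite opprK => -> //.
- by have := pi_gt0 R; lra.
- exact: continuous_subspaceT.
Qed.

Lemma Rintegral_Ipi_cos2_sub_sin2 : \int[mu]_(t in Ipi) (cos t ^+ 2 - sin t ^+ 2) = 0.
Proof.
have deriv_sin_cos :
    (fun t : R => sin t * cos t)^`()%classic = fun t => cos t ^+ 2 - sin t ^+ 2.
  apply/funext => t; rewrite derive1E -[fun t => _]/(sin * cos)%R.
  rewrite deriveM; [|exact: derivable_sin|exact: derivable_cos].
  by rewrite !derive_val /GRing.scale /= !expr2; ring.
have cont_sin_cos : continuous (fun t : R => sin t * cos t).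
  by move=> t; apply: continuousM; [exact: continuous_sin|exact: continuous_cos].
rewrite /Rintegral /Ipi (@continuous_FTC2 _ _ (fun t : R => sin t * cos t)).
- by rewrite sinN sinpi oppr0 !mul0r -EFinB subrr.
- by rewrite gtrN // pi_gt0.
- apply: continuous_subspaceT => t.
  apply: (@continuousB _ _ _ (fun t => cos t ^+ 2) (fun t => sin t ^+ 2)).
    exact: continuous_sqr (@continuous_cos R) t.
  exact: continuous_sqr (@continuous_sin R) t.
- split.
  + by move=> t _; apply: derivableM; [exact: derivable_sin|exact: derivable_cos].
  + exact/cvg_at_right_filter/cont_sin_cos.
  + exact/cvg_at_left_filter/cont_sin_cos.
- by move=> t _; rewrite deriv_sin_cos.
Qed.

Lemma Rintegral_Ipi_cos2 : \int[mu]_(t in Ipi) (cos t ^+ 2) = pi.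
Proof.
have ccos2 := continuous_sqr (@continuous_cos R).
have csin2 := continuous_sqr (@continuous_sin R).
have := Rintegral_Ipi_cos2_sub_sin2; rewrite RintegralB_Ipi // => diffE.
have sumE : \int[mu]_(t in Ipi) (cos t ^+ 2 + sin t ^+ 2) = pi *+ 2.
  by under eq_Rintegral do rewrite cos2Dsin2; rewrite Rintegral_Ipi_cst mul1r.
rewrite RintegralD_Ipi // in sumE.
by move: diffE sumE; rewrite mulr2n; lra.
Qed.

Lemma Rintegral_Ipi_sin2 : \int[mu]_(t in Ipi) (sin t ^+ 2) = pi.
Proof.
have := Rintegral_Ipi_cos2_sub_sin2.
rewrite RintegralB_Ipi ?Rintegral_Ipi_cos2; first lra.
- exact: continuous_sqr (@continuous_cos R).
- exact: continuous_sqr (@continuous_sin R).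
Qed.

End TrigIntegrals.

Arguments Ipi {R}.

Section ComplexificationNorm.
Variables (R : realType) (X : normedModType R).
Local Notation mu := (@lebesgue_measure R).

Definition trig_comb (x : X * X) (t : R) : X := cos t *: x.1 + sin t *: x.2.

Definition cnorm2R (x : X * X) : R :=
  (2 * pi)^-1 * \int[mu]_(t in Ipi) (`|trig_comb x t| ^+ 2).

Definition cnorm (x : X * X) : R := Num.sqrt (cnorm2R x).

Lemma trig_combZ (a : R) x t : trig_comb (a *: x) t = a *: trig_comb x t.
Proof. by rewrite /trig_comb scalerDr !scalerA ![a * _]mulrC. Qed.

Lemma trig_combD x y t : trig_comb (x + y) t = trig_comb x t + trig_comb y t.
Proof. by rewrite /trig_comb !scalerDr addrACA. Qed.

Lemma trig_comb_even x t : trig_comb x t + trig_comb x (- t) = (2 * cos t) *: x.1.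
Proof.
rewrite /trig_comb cosN sinN scaleNr addrACA subrr addr0 -scalerDl.
by congr (_ *: _); ring.
Qed.

Lemma trig_comb_odd x t : trig_comb x t - trig_comb x (- t) = (2 * sin t) *: x.2.
Proof.
rewrite /trig_comb cosN sinN scaleNr opprD opprK addrACA subrr add0r -scalerDl.
by congr (_ *: _); ring.
Qed.

Lemma continuous_trig_comb_norm2 x : continuous (fun t => `|trig_comb x t| ^+ 2).
Proof.
apply: continuous_sqr => t; apply: (continuous_comp (f := trig_comb x)).
  apply: continuousD; apply: continuousZr_tmp.
    exact: continuous_cos.
  exact: continuous_sin.
exact: norm_continuous.
Qed.

Lemma cnorm2R_ge0 x : 0 <= cnorm2R x.
Proof.
rewrite mulr_ge0 ?invr_ge0 ?mulr_ge0 ?pi_ge0 //.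
by apply: Rintegral_ge0 => t _; rewrite sqr_ge0.
Qed.

Lemma cnorm2E x1 x2 : cnorm2 x1 x2 = (cnorm (x1, x2) ^+ 2)%:E.
Proof.
rewrite /cnorm sqr_sqrtr ?cnorm2R_ge0 // /cnorm2 /cnorm2R.
by rewrite (continuous_integral_Ipi (@continuous_trig_comb_norm2 (x1, x2))).
Qed.

Lemma cnorm2RZ (a : R) x : cnorm2R (a *: x) = a ^+ 2 * cnorm2R x.
Proof.
rewrite /cnorm2R mulrCA; congr (_ * _).
rewrite -RintegralZl_Ipi; last exact: continuous_trig_comb_norm2.
apply: eq_Rintegral => t _.
by rewrite trig_combZ normrZ exprMn real_normK ?num_real.
Qed.

Lemma cnorm2R_le x : cnorm2R x <= (`|x.1| + `|x.2|) ^+ 2.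
Proof.
rewrite /cnorm2R ler_pdivrMl ?mulr_gt0 ?pi_gt0 // mulr_natl mulrC -Rintegral_Ipi_cst.
apply: Rintegral_Ipi_le => [||t]; first exact: continuous_trig_comb_norm2.
  exact: cst_continuous.
rewrite lerXn2r ?nnegrE ?addr_ge0 // (le_trans (ler_normD _ _)) // lerD // normrZ.
  by rewrite ler_piMl // cos_max.
by rewrite ler_piMl // sin_max.
Qed.

Lemma norm_le_cnorm_sym (h : R -> R) (v : X) x : continuous h ->
  \int[mu]_(t in Ipi) (h t ^+ 2) = pi ->
  (forall t, `|(2 * h t) *: v| <= `|trig_comb x t| + `|trig_comb x (- t)|) ->
  `|v| <= 2 * cnorm x.
Proof.
move=> ch h2E hle.
suff : `|v| ^+ 2 <= 2 * cnorm x ^+ 2.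
  by have := normr_ge0 v; have := sqrtr_ge0 (cnorm2R x); rewrite -/(cnorm x); nra.
rewrite sqr_sqrtr ?cnorm2R_ge0 //.
have cg := @continuous_trig_comb_norm2 x.
have cgN : continuous (fun t => `|trig_comb x (- t)| ^+ 2).
  move=> t; apply: (continuous_comp (f := -%R) (g := fun t => `|trig_comb x t| ^+ 2)).
    exact: opp_continuous.
  exact: cg.
have ch2 := continuous_sqr ch.
have key : \int[mu]_(t in Ipi) (4 * `|v| ^+ 2 * h t ^+ 2) <=
    \int[mu]_(t in Ipi) (2 * (`|trig_comb x t| ^+ 2 + `|trig_comb x (- t)| ^+ 2)).
  apply: Rintegral_Ipi_le => [||t]; first exact: continuous_mull.
    by apply: continuous_mull; apply: continuous_add.
  have := sqr_addr_le `|trig_comb x t| `|trig_comb x (- t)| ltr01.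
  rewrite invr1 -mulrDr; apply: le_trans.
  have -> : 4 * `|v| ^+ 2 * h t ^+ 2 = `|(2 * h t) *: v| ^+ 2.
    by rewrite normrZ exprMn real_normK ?num_real // exprMn; ring.
  by rewrite lerXn2r ?nnegrE ?addr_ge0.
rewrite RintegralZl_Ipi // h2E RintegralZl_Ipi ?RintegralD_Ipi // in key; last first.
  exact: continuous_add.
rewrite (Rintegral_Ipi_oppr cg) in key.
have pi_gt0 := pi_gt0 R.
have -> : 2 * cnorm2R x = (\int[mu]_(t in Ipi) `|trig_comb x t| ^+ 2) / pi.
  by rewrite /cnorm2R invfM !mulrA divff ?pnatr_eq0 // mul1r mulrC.
rewrite ler_pdivlMr //; lra.
Qed.

Lemma norm_fst_le_cnorm x : `|x.1| <= 2 * cnorm x.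
Proof.
apply: (@norm_le_cnorm_sym cos); [exact: continuous_cos|exact: Rintegral_Ipi_cos2|].
by move=> t; rewrite -trig_comb_even; exact: ler_normD.
Qed.

Lemma norm_snd_le_cnorm x : `|x.2| <= 2 * cnorm x.
Proof.
apply: (@norm_le_cnorm_sym sin); [exact: continuous_sin|exact: Rintegral_Ipi_sin2|].
by move=> t; rewrite -trig_comb_odd; exact: ler_normB.
Qed.

Lemma cnorm_le x : cnorm x <= `|x.1| + `|x.2|.
Proof.
rewrite -[leRHS]ger0_norm ?addr_ge0 // -sqrtr_sqr ler_sqrt ?sqr_ge0 //.
exact: cnorm2R_le.
Qed.

Lemma cnorm_eq0 x : cnorm x = 0 -> x = 0.
Proof.
move=> x0; have := norm_fst_le_cnorm x; have := norm_snd_le_cnorm x.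
rewrite x0 mulr0 !normr_le0 => /eqP x2 /eqP x1.
by case: x x1 x2 {x0} => /= ? ? -> ->.
Qed.

Lemma cnormZ (a : R) x : cnorm (a *: x) = `|a| * cnorm x.
Proof. by rewrite /cnorm cnorm2RZ sqrtrM ?sqr_ge0 // sqrtr_sqr. Qed.

Lemma cnorm2R_addr_le x y s : 0 < s ->
  cnorm2R (x + y) <= (1 + s) * cnorm2R x + (1 + s^-1) * cnorm2R y.
Proof.
move=> s0; have cx := @continuous_trig_comb_norm2 x.
have cy := @continuous_trig_comb_norm2 y.
rewrite /cnorm2R !(mulrCA (1 + _)) -mulrDr.
rewrite ler_pM2l ?invr_gt0 ?mulr_gt0 ?pi_gt0 //.
rewrite -!RintegralZl_Ipi // -RintegralD_Ipi; last first.
- exact: continuous_mull.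
- exact: continuous_mull.
apply: Rintegral_Ipi_le => [||t]; first exact: continuous_trig_comb_norm2.
  by apply: continuous_add; exact: continuous_mull.
apply: le_trans (sqr_addr_le _ _ s0).
by rewrite trig_combD lerXn2r ?nnegrE ?addr_ge0 // ler_normD.
Qed.

Lemma cnorm_triangle x y : cnorm (x + y) <= cnorm x + cnorm y.
Proof.
have cnorm0 : cnorm 0 = 0.
  by rewrite /cnorm -(scale0r (0 : X * X)) cnorm2RZ expr0n mul0r sqrtr0.
have [->|x0] := eqVneq x 0; first by rewrite add0r cnorm0 add0r.
have [->|y0] := eqVneq y 0; first by rewrite addr0 cnorm0 addr0.
have cnorm_gt0 z : z != 0 -> 0 < cnorm z.
  by move=> z0; rewrite lt_def sqrtr_ge0 andbT; apply: contra z0 => /eqP/cnorm_eq0 ->.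
have [a0 c0] := (cnorm_gt0 _ x0, cnorm_gt0 _ y0).
have cnorm2RE z : cnorm2R z = cnorm z ^+ 2 by rewrite sqr_sqrtr ?cnorm2R_ge0.
have optimal_weight : let s := cnorm y / cnorm x in
    (1 + s) * cnorm2R x + (1 + s^-1) * cnorm2R y = (cnorm x + cnorm y) ^+ 2.
  by rewrite /= !cnorm2RE; field; rewrite !gt_eqF.
rewrite -[leRHS]ger0_norm ?addr_ge0 ?sqrtr_ge0 // -sqrtr_sqr -optimal_weight /= {1}/cnorm.
rewrite ler_sqrt; first exact: cnorm2R_addr_le (divr_gt0 c0 a0).
by rewrite addr_ge0 // mulr_ge0 ?cnorm2R_ge0 // addr_ge0 // ?invr_ge0 divr_ge0 // ltW.
Qed.
End ComplexificationNorm.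

Section StandardComplexification.
Variables (R : realType) (X : completeNormedModType R).

Definition cplx := (X * X)%type.
HB.instance Definition _ := GRing.Lmodule.on cplx.

Lemma cplx_normD (x y : cplx) : cnorm (x + y) <= cnorm x + cnorm y.
Proof. exact: cnorm_triangle. Qed.

Lemma cplx_normZ (a : R) (x : cplx) : cnorm (a *: x) = `|a| * cnorm x.
Proof. exact: cnormZ. Qed.

Lemma cplx_norm_eq0 (x : cplx) : cnorm x = 0 -> x = 0.
Proof. exact: cnorm_eq0. Qed.

HB.instance Definition _ :=
  Lmodule_isNormed.Build R cplx cplx_normD cplx_normZ cplx_norm_eq0.

Lemma cplx_complete (F : set_system cplx) : ProperFilter F -> cauchy F -> cvg F.
Proof.
move=> FF Fc.
have c1 : cauchy ((fun z : cplx => z.1) @ F).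
  apply: (cauchy_lipschitz_map (k := 2)) => // z w.
  exact: (norm_fst_le_cnorm (z - w)).
have c2 : cauchy ((fun z : cplx => z.2) @ F).
  apply: (cauchy_lipschitz_map (k := 2)) => // z w.
  exact: (norm_snd_le_cnorm (z - w)).
have [l1 Fl1] := iffLR (cvg_ex _) (cauchy_cvg _ c1).
have [l2 Fl2] := iffLR (cvg_ex _) (cauchy_cvg _ c2).
apply/cvg_ex; exists ((l1, l2) : cplx); apply/cvgrPdist_lt => e e0.
have e20 : 0 < e / 2 by rewrite divr_gt0.
move/cvgrPdist_lt : Fl1 => /(_ _ e20) near1; move/cvgrPdist_lt : Fl2 => /(_ _ e20) near2.
apply: filterS (filterI near1 near2) => z [z1 z2].
apply: le_lt_trans (cnorm_le ((l1, l2) - z)) _.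
by rewrite [e]splitr ltrD.
Qed.

HB.instance Definition _ := Uniform_isComplete.Build cplx cplx_complete.

Definition std_complexification : complexification X.
Proof.
apply: (@Complexification R X cplx id id (fun _ => erefl) (fun _ => erefl)
  (fun _ _ _ => erefl)).
by move=> x1 x2; rewrite cnorm2E.
Defined.

End StandardComplexification.

Section AnyComplexification.
Variables (R : realType) (X : completeNormedModType R) (c : complexification X).
Local Notation cinj := (@cinj R X c).
Local Notation cproj := (@cproj R X c).

Lemma norm_cinj p : `|cinj p| = cnorm p.
Proof.
have := cinj_norm c p.1 p.2; rewrite cnorm2E -surjective_pairing => -[] sqrE.
by apply/eqP; rewrite -(@eqrXn2 _ 2) ?sqrE ?sqrtr_ge0.
Qed.

Lemma cproj_linear (a : R) u v : cproj (a *: u + v) = a *: cproj u + cproj v.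
Proof. by apply: (can_inj (cinjK c)); rewrite cinj_linear !cprojK. Qed.

Lemma cinj_split p : cinj p = cinj (p.1, 0) + cinj (0, p.2).
Proof.
rewrite -[cinj (p.1, 0)]scale1r -cinj_linear scale1r; congr cinj.
by apply: injective_projections; rewrite /= ?addr0 ?add0r.
Qed.

Lemma bounded_linear_cproj_fst : bounded_linear (fun z => (cproj z).1).
Proof.
apply: (bounded_linear_of_le (k := 2)) => [a u v|z]; first by rewrite cproj_linear.
by rewrite -[w in _ * `|w|](@cprojK R X c) norm_cinj norm_fst_le_cnorm.
Qed.

Lemma bounded_linear_cproj_snd : bounded_linear (fun z => (cproj z).2).
Proof.
apply: (bounded_linear_of_le (k := 2)) => [a u v|z]; first by rewrite cproj_linear.
by rewrite -[w in _ * `|w|](@cprojK R X c) norm_cinj norm_snd_le_cnorm.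
Qed.

Lemma bounded_linear_cinj_fst : bounded_linear (fun x => cinj (x, 0)).
Proof.
apply: (bounded_linear_of_le (k := 1)) => [a u v|x].
  rewrite -cinj_linear; congr cinj.
  by apply: injective_projections; rewrite /= ?scaler0 ?addr0.
by rewrite mul1r norm_cinj (le_trans (cnorm_le _)) //= normr0 addr0.
Qed.

Lemma bounded_linear_cinj_snd : bounded_linear (fun x => cinj (0, x)).
Proof.
apply: (bounded_linear_of_le (k := 1)) => [a u v|x].
  rewrite -cinj_linear; congr cinj.
  by apply: injective_projections; rewrite /= ?scaler0 ?addr0.
by rewrite mul1r norm_cinj (le_trans (cnorm_le _)) //= normr0 add0r.
Qed.

End AnyComplexification.

Section RealFormOfComplexification.
Variables (R : realType) (I : real_op_ideal R) (X Y : completeNormedModType R).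
Variables (cX : complexification X) (cY : complexification Y).
Local Notation TC T := (@cT R X Y cX cY T).
Local Notation NX := (@cN R X cX).
Local Notation NY := (@cN R Y cY).

Lemma cT_cN (T : X -> Y) : (forall x, T (- x) = - T x) ->
  forall z, TC T (NX z) = NY (TC T z).
Proof. by move=> TN z; rewrite /cT /cN !cinjK /= TN. Qed.

Lemma cT_split (T : X -> Y) : TC T =
  ((fun y => @cinj R Y cY (y, 0)) \o T \o (fun z => (@cproj R X cX z).1)) \+
  ((fun y => @cinj R Y cY (0, y)) \o T \o (fun z => (@cproj R X cX z).2)).
Proof. by apply/funext => z; rewrite /cT cinj_split. Qed.

Lemma ideal_sub_complexify (T : X -> Y) :
  I X Y T -> ideal_complexify I _ NX _ NY (TC T).
Proof.
move=> IT; split; first exact/cT_cN/bounded_linearN/(ideal_bounded _ _ _ _ _ IT).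
rewrite cT_split; apply: ideal_add; apply: ideal_comp => //.
- exact: bounded_linear_cproj_fst.
- exact: bounded_linear_cinj_fst.
- exact: bounded_linear_cproj_snd.
- exact: bounded_linear_cinj_snd.
Qed.

Lemma complexify_sub_ideal (T : X -> Y) :
  ideal_complexify I _ NX _ NY (TC T) -> I X Y T.
Proof.
move=> [_ IcT].
have -> : T = (fun z => (@cproj R Y cY z).1) \o TC T \o (fun x => @cinj R X cX (x, 0)).
  by apply/funext => x; rewrite /cT /= !cinjK.
apply: ideal_comp IcT; [exact: bounded_linear_cinj_fst|exact: bounded_linear_cproj_fst].
Qed.

End RealFormOfComplexification.

Theorem theorem1 (R : realType) (I : real_op_ideal R)
  (X Y : completeNormedModType R) :
  real_form (ideal_complexify I) X Y = I X Y.
Proof.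
apply/funext => T; apply/propext; split => [|IT cX cY].
  move/(_ (std_complexification X) (std_complexification Y)).
  exact: complexify_sub_ideal.
exact: ideal_sub_complexify.
Qed.
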